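(* Fix an even integer $m$ and an integer $r\ge 0$ with $m-2r\ge0$, and put $\ell_n=\frac{n-m}2+r$ for even $n$. For $y\in\mathbb C$ let $$Q_{n(+)}(y)=Q_{n(+)}(y|A_1,\dots,A_{\ell_n}|B_1,\dots,B_n)=\frac{\prod_{a=r+1}^{\ell_n}(1-A_a^2e^{2y})}{\prod_{j=1}^n(1-B_je^y)}.$$ Consider a family of polynomials $P_n(A_1,\dots,A_{\ell_n}|B_1,\dots,B_n)$ in the $A_a$ whose coefficients are symmetric Laurent polynomials in the $B_j$, and suppose there exist polynomials $\tilde P_n=\tilde P_n(A_1,\dots,A_{\ell_n}|B_1,\dots,B_{n-2}|B)$ and $\overline P_n=\overline P_n(A_1,\dots,A_{\ell_n}|B_1,\dots,B_{n-2}|B)$ in the $A_a$ and constants $d_n$ such that (1) $P_n(A_1,\dots,A_{\ell_n}|B_1,\dots,B_{n-2},B,-B)=\prod_{a=1}^r(1-A_a^2B^{-2})\,\tilde P_n$; (2) $\mathrm{Asym}\{\tilde P_n\}=\mathrm{Asym}\{\prod_{a=r+1}^{\ell_n-1}(1-A_a^2B^{-2})\,\overline P_n\}$; (3) $\overline P_n(A_1,\dots,A_{\ell_n-1},\pm B|B_1,\dots,B_{n-2}|B)=\pm B^{n-1}d_nP_{n-2}(A_1,\dots,A_{\ell_n-1}|B_1,\dots,B_{n-2})$, where Asym denotes antisymmetrization with respect to $A_{r+1},\dots,A_{\ell_n}$. Then $P^{new}_n=P_nQ_{n(+)}(y)$ is symmetric in the $B_j$ and satisfies (1), (2), (3) (with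 $P_n,P_{n-2}$ replaced by $P^{new}_n,P^{new}_{n-2}$) for appropriate $\tilde P^{new}_n$ and $\overline P^{new}_n$.
   Context: Antisymmetrization of a function $f$ of variables $A_{r+1},\dots,A_{\ell_n}$ means $\sum_{\sigma}\mathrm{sgn}(\sigma)\,f(A_{\sigma(r+1)},\dots,A_{\sigma(\ell_n)})$ over permutations $\sigma$ of $\{r+1,\dots,\ell_n\}$. *)

From HB Require Import structures.
From mathcomp Require Import all_boot all_order all_algebra all_fingroup.
From mathcomp Require Import mpoly.
Set Implicit Arguments. Unset Strict Implicit. Unset Printing Implicit Defensive.
Import GRing.Theory.
Local Open Scope ring_scope.

Definition ell (m r n : nat) : nat := ((n - m)./2 + r)%N.

(* (v_1, ..., v_k, b) as a vector of length l (intended l = k+1):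
   entries of index < k are taken from v, the remaining one is b. *)
Definition ext1 (F : Type) (k l : nat) (v : 'I_k -> F) (b : F) : 'I_l -> F :=
  fun i => if (insub (val i) : option 'I_k) is Some j then v j else b.

(* (v_1, ..., v_k, b1, b2) as a vector of length l (intended l = k+2). *)
Definition ext2 (F : Type) (k l : nat) (v : 'I_k -> F) (b1 b2 : F) : 'I_l -> F :=
  fun i => if (insub (val i) : option 'I_k) is Some j then v j
           else if val i == k then b1 else b2.

(* Antisymmetrization of p in the variables with (0-based) index >= r,
   i.e. A_{r+1}, ..., A_k in the paper's 1-based numbering. *)
Definition Asym (F : fieldType) (k r : nat) (p : {mpoly F[k]}) : {mpoly F[k]} :=
  \sum_(s : 'S_k | [forall i : 'I_k, (val i < r)%N ==> (s i == i)])
     (-1) ^+ (odd_perm s) *: msym s p.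

(* Numerator of Q_{n(+)} with e^y = x : prod_{a=r+1}^{ell_n} (1 - A_a^2 x^2). *)
Definition Qnum (F : fieldType) (k r : nat) (x : F) : {mpoly F[k]} :=
  \prod_(i : 'I_k | (r <= val i)%N) (1 - (x ^+ 2) *: 'X_i ^+ 2).

Definition Qden (F : fieldType) (n : nat) (Bs : 'I_n -> F) (x : F) : F :=
  \prod_(j : 'I_n) (1 - Bs j * x).

Definition Pnew (F : fieldType) (m r : nat) (x : F)
  (P : forall n, ('I_n -> F) -> {mpoly F[ell m r n]}) (n : nat) (Bs : 'I_n -> F)
  : {mpoly F[ell m r n]} :=
  (Qden Bs x)^-1 *: (P n Bs * Qnum (ell m r n) r x).

Definition props123 (F : fieldType) (m r : nat)
  (P : forall n, ('I_n -> F) -> {mpoly F[ell m r n]})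
  (Pt Pb : forall n, ('I_(n - 2) -> F) -> F -> {mpoly F[ell m r n]})
  (d : nat -> F) (n : nat) (Bs : 'I_(n - 2) -> F) (B : F) : Prop :=
  [/\ P n (ext2 Bs B (- B)) =
        (\prod_(i : 'I_(ell m r n) | (val i < r)%N) (1 - (B ^- 2) *: 'X_i ^+ 2))
        * Pt n Bs B,
      Asym r (Pt n Bs B) =
        Asym r ((\prod_(i : 'I_(ell m r n) | (r <= val i < ell m r n - 1)%N)
                   (1 - (B ^- 2) *: 'X_i ^+ 2)) * Pb n Bs B)
    & forall A' : 'I_(ell m r (n - 2)%N) -> F,
        (Pb n Bs B).@[ext1 A' B] = B ^+ (n - 1) * d n * (P (n - 2)%N Bs).@[A']
        /\ (Pb n Bs B).@[ext1 A' (- B)] = - (B ^+ (n - 1) * d n * (P (n - 2)%N Bs).@[A'])].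

Arguments props123 {F m r} P Pt Pb d n Bs B.
Arguments Pnew {F m r} x P n Bs.

From HB Require Import structures.
From mathcomp Require Import all_boot all_order all_algebra all_fingroup.
From mathcomp Require Import mpoly.
From mathcomp Require Import ring zify.
Set Implicit Arguments. Unset Strict Implicit. Unset Printing Implicit Defensive.
Import GRing.Theory.
Local Open Scope ring_scope.

(* The factor Q_{n(+)} splits off from all three properties.  Its numerator
   is symmetric in A_{r+1}, ..., A_{ell_n}, so it commutes with Asym; at
   (B_{n-1}, B_n) = (B, -B) its denominator gains the factor
   (1 - B x)(1 + B x) = 1 - B^2 x^2, and evaluating the numerator at
   A_{ell_n} = +-B produces exactly the same factor, which cancels, leaving
   the numerator and denominator of Q_{(n-2)(+)}. *)

Lemma perm_fix_lt_geq k r (s : 'S_k) :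
  [forall i : 'I_k, (val i < r)%N ==> (s i == i)] ->
  forall i : 'I_k, (r <= s i)%N = (r <= i)%N.
Proof.
move=> /forallP s_fix i; case: (ltnP i r) => [i_lt | i_ge].
  by have := s_fix i; rewrite i_lt => /eqP ->; rewrite leqNgt i_lt.
case: (ltnP (s i) r) => // si_lt.
have := s_fix (s i); rewrite si_lt => /eqP /perm_inj si_eq.
by move: i_ge; rewrite -si_eq leqNgt si_lt.
Qed.

Section Antisymmetrization.
Variables (F : fieldType) (k r : nat).

Lemma Asym_mulr (p q : {mpoly F[k]}) :
  (forall s : 'S_k, [forall i : 'I_k, (val i < r)%N ==> (s i == i)] -> msym s q = q) ->
  Asym r (p * q) = Asym r p * q.
Proof.
move=> q_sym; rewrite /Asym mulr_suml; apply: eq_bigr => s s_fix.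
by rewrite msymM q_sym // scalerAl.
Qed.

Lemma msymXU (s : 'S_k) (i : 'I_k) : msym s ('X_i : {mpoly F[k]}) = 'X_(s i).
Proof. by rewrite /msym mmapX mmap1U. Qed.

Lemma msym_Qnum (x : F) (s : 'S_k) :
  [forall i : 'I_k, (val i < r)%N ==> (s i == i)] -> msym s (Qnum k r x) = Qnum k r x.
Proof.
move=> s_fix; rewrite /Qnum rmorph_prod /=.
rewrite [RHS](reindex_inj (@perm_inj _ s)) /=.
apply: eq_big => [i | i _]; first by rewrite perm_fix_lt_geq.
by rewrite msymB msym1 msymZ rmorphXn /= msymXU.
Qed.

End Antisymmetrization.

Section Extension.
Variables (R : comNzRingType) (T : Type) (G : nat -> T -> R) (k : nat) (v : 'I_k -> T).

Lemma prod_ext1 l b : l = k.+1 ->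
  \prod_(i < l) G i (ext1 v b i) = (\prod_(i < k) G i (v i)) * G k b.
Proof.
move=> ->; rewrite big_ord_recr /= /ext1 insubN ?ltnn //; congr (_ * _).
apply: eq_bigr => i _; rewrite (insubT (fun j => (j < k)%N) (ltn_ord i)) /=.
by congr (G _ (v _)); apply: val_inj.
Qed.

Lemma prod_ext2 l b1 b2 : l = k.+2 ->
  \prod_(i < l) G i (ext2 v b1 b2 i)
  = (\prod_(i < k) G i (v i)) * G k b1 * G k.+1 b2.
Proof.
move=> ->; rewrite !big_ord_recr /= /ext2 !insubN ?ltnn ?ltnNge ?leqnSn //.
rewrite eqxx ifN ?neq_ltn ?ltnSn ?orbT //; congr (_ * _ * _).
apply: eq_bigr => i _; rewrite (insubT (fun j => (j < k)%N) (ltn_ord i)) /=.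
by congr (G _ (v _)); apply: val_inj.
Qed.

End Extension.

Section Qfactor.
Variables (F : fieldType) (x : F).

Lemma Qden_perm n (Bs : 'I_n -> F) (s : 'S_n) :
  Qden (fun j => Bs (s j)) x = Qden Bs x.
Proof. by rewrite /Qden [RHS](reindex_inj (@perm_inj _ s)). Qed.

Lemma Qden_ext2 k n (Bs : 'I_k -> F) B : n = k.+2 ->
  Qden (ext2 (l:=n) Bs B (- B)) x = Qden Bs x * (1 - B ^+ 2 * x ^+ 2).
Proof.
move=> n_eq; rewrite /Qden (prod_ext2 (fun _ b => 1 - b * x)) //.
by rewrite -mulrA; congr (_ * _); ring.
Qed.

Lemma meval_Qnum k r (a : 'I_k -> F) :
  (Qnum k r x).@[a] = \prod_(i < k) (if (r <= i)%N then 1 - x ^+ 2 * a i ^+ 2 else 1).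
Proof.
rewrite /Qnum rmorph_prod big_mkcond /=; apply: eq_bigr => i _.
by case: ifP => _ //; rewrite mevalB meval1 mevalZ rmorphXn /= mevalXU.
Qed.

Lemma Qnum_ext1 k l r (A' : 'I_k -> F) b : l = k.+1 -> (r <= k)%N ->
  (Qnum l r x).@[ext1 A' b] = (Qnum k r x).@[A'] * (1 - x ^+ 2 * b ^+ 2).
Proof.
move=> l_eq r_le; rewrite !meval_Qnum.
rewrite (prod_ext1 (fun i a => if (r <= i)%N then 1 - x ^+ 2 * a ^+ 2 else 1)) //.
by rewrite r_le.
Qed.

End Qfactor.

Section NewFamily.
Variables (F : fieldType) (m r : nat) (x : F).

Lemma ell_subn2 n : (m + 2 <= n)%N -> ell m r n = (ell m r (n - 2)).+1.
Proof.
move=> n_ge; rewrite /ell.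
have -> : (n - m = (n - 2 - m).+2)%N by lia.
by rewrite /= addSn.
Qed.

Definition Qpair n (Bs : 'I_(n - 2) -> F) (B : F) : {mpoly F[ell m r n]} :=
  (Qden (ext2 (l:=n) Bs B (- B)) x)^-1 *: Qnum (ell m r n) r x.

Lemma msym_Qpair n (Bs : 'I_(n - 2) -> F) (B : F) : forall s : 'S_(ell m r n),
  [forall i, (val i < r)%N ==> (s i == i)] -> msym s (Qpair Bs B) = Qpair Bs B.
Proof. by move=> s s_fix; rewrite msymZ msym_Qnum. Qed.

Lemma Qpair_ext1 n (Bs : 'I_(n - 2) -> F) (B : F) (A' : 'I_(ell m r (n - 2)) -> F) (b : F) :
  (m + 2 <= n)%N -> b ^+ 2 = B ^+ 2 -> 1 - B ^+ 2 * x ^+ 2 != 0 ->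
  (Qpair Bs B).@[ext1 A' b] = (Qden Bs x)^-1 * (Qnum _ r x).@[A'].
Proof.
move=> n_ge b2 Bx_neq0; rewrite mevalZ Qnum_ext1 ?leq_addl //; last exact: ell_subn2.
rewrite Qden_ext2; last by lia.
rewrite b2 invfM -mulrA; congr (_ * _).
by rewrite [x ^+ 2 * _]mulrC mulrCA mulVf ?mulr1.
Qed.

Lemma Pnew_props123 (P : forall n, ('I_n -> F) -> {mpoly F[ell m r n]})
    (Pt Pb : forall n, ('I_(n - 2) -> F) -> F -> {mpoly F[ell m r n]})
    (d : nat -> F) n Bs B :
  (m + 2 <= n)%N -> 1 - B ^+ 2 * x ^+ 2 != 0 ->
  props123 P Pt Pb d n Bs B ->
  props123 (Pnew x P) (fun n Bs B => Pt n Bs B * Qpair Bs B)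
                      (fun n Bs B => Pb n Bs B * Qpair Bs B) d n Bs B.
Proof.
move=> n_ge Bx_neq0 [P_pair Pt_asym Pb_ext]; split.
- by rewrite /Pnew P_pair -mulrA /Qpair -!scalerAr.
- by rewrite mulrA !(Asym_mulr _ (msym_Qpair Bs B)) Pt_asym.
move=> A'; have [Pb_plus Pb_minus] := Pb_ext A'.
rewrite /Pnew !mevalM !Qpair_ext1 ?sqrrN // mevalZ mevalM Pb_plus Pb_minus.
by split; rewrite -?mulNr; ring.
Qed.

End NewFamily.

Theorem proposition5 (F : fieldType) (m r : nat) (x : F)
  (P : forall n, ('I_n -> F) -> {mpoly F[ell m r n]})
  (Pt Pb : forall n, ('I_(n - 2) -> F) -> F -> {mpoly F[ell m r n]})
  (d : nat -> F) :
  ~~ odd m -> (2 * r <= m)%N ->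
  (* coefficients of P_n are symmetric in the B_j *)
  (forall n, ~~ odd n -> (m <= n)%N ->
     forall (Bs : 'I_n -> F) (s : 'S_n), (forall j, Bs j != 0) ->
       P n (fun j => Bs (s j)) = P n Bs) ->
  (* hypotheses (1), (2), (3) *)
  (forall n, ~~ odd n -> (m + 2 <= n)%N ->
     forall (Bs : 'I_(n - 2) -> F) (B : F), (forall j, Bs j != 0) -> B != 0 ->
       props123 P Pt Pb d n Bs B) ->
  (* conclusion: P^new = P * Q_{n(+)} is symmetric in the B_j ... *)
  (forall n, ~~ odd n -> (m <= n)%N ->
     forall (Bs : 'I_n -> F) (s : 'S_n), (forall j, Bs j != 0) ->
       Pnew x P n (fun j => Bs (s j)) = Pnew x P n Bs)
  /\
  (* ... and satisfies (1), (2), (3) (away from the poles of Q) *)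
  (exists Ptn Pbn : forall n, ('I_(n - 2) -> F) -> F -> {mpoly F[ell m r n]},
     forall n, ~~ odd n -> (m + 2 <= n)%N ->
     forall (Bs : 'I_(n - 2) -> F) (B : F), (forall j, Bs j != 0) -> B != 0 ->
       (forall j, 1 - Bs j * x != 0) -> 1 - B ^+ 2 * x ^+ 2 != 0 ->
       props123 (Pnew x P) Ptn Pbn d n Bs B).
Proof.
move=> _ _ P_sym P_props; split.
  by move=> n n_even n_ge Bs s Bs_neq0; rewrite /Pnew P_sym // Qden_perm.
exists (fun n Bs B => Pt n Bs B * Qpair m r x Bs B),
       (fun n Bs B => Pb n Bs B * Qpair m r x Bs B).
move=> n n_even n_ge Bs B Bs_neq0 B_neq0 _ Bx_neq0.
exact/Pnew_props123/P_props.
Qed.
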